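(* No consistently-dimensioned expression fails because of dimension: for every expression $e$ of a static program and every state $\Gamma$, if $\#(e) \sqsubset \top$ then no configuration $\chi$ with $((e, \emptyset)\ |\ \Gamma) \to^{*} \chi$ fails because of dimension.
   Context: Setting: the core language $\epsilon_0$ (expressions: variables, constants, let-blocks binding bundle components, procedure calls, primitive calls, conditionals, bundles of multiple values, fork, join), evaluated from the initial configuration $(e,\emptyset)\ |\ \Gamma$ (main stack holding $e$ with empty local environment, value stack holding one value separator $|$) by a small-step reduction relation $\to$, with $\to^*$ its reflexive-transitive closure. A configuration fails because of dimension when the value stack does not have the shape required by the contractive rule of the holed expression on top of the main stack: e.g. a let receives a bundle with fewer values than bound variables, a procedure/fork/primitive call or bundle receives a wrong number of one-value bundles, or a conditional/join discriminand is not a one-value bundle. Dimensions live in the flat lattice $\mathbb{N}\cup\{\bot,\top\}$ with $\bot\sqsubset\lfloor n\rfloor\sqsubset\top$; $\#(e)$ is a static inference of the bundle size $e$ evaluates to (variables/constants/fork/join $\lfloor1\rfloor$, bundles of $n$ single-valued items $\lfloor n\rfloor$, primitives their out-dimension, procedure calls the procedure's least-fixpoint out-dimension, let the dimension of its body, conditionals the join of branch dimensions, and $\top$ whenever a side condition such as arity or single-valuedness of sub-expressions fails). An expression is consistently-dimensioned if $\#(e)\sqsubset\top$. Programs considered are static (no self-modification of global or procedure definitions). *)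

From mathcomp Require Import all_boot.
Set Implicit Arguments. Unset Strict Implicit. Unset Printing Implicit Defensive.

Inductive dim := DBot | DFin of nat | DTop.

Definition dle (a b : dim) : bool :=
  match a, b with
  | DBot, _ => true
  | _, DTop => true
  | DFin m, DFin n => m == n
  | _, _ => false
  end.

Definition dlt (a b : dim) : bool := dle a b && ~~ dle b a.

Definition djoin (a b : dim) : dim :=
  match a, b with
  | DBot, x => x
  | x, DBot => x
  | DFin m, DFin n => if m == n then DFin m else DTop
  | _, _ => DTop
  end.

Section Epsilon0.
Variables (V S : Type). (* V: values (constants), S: global states Γ *)

Inductive expr :=
| EVar of nat
| EConst of V
| ELet of seq nat & expr & expr    (* let x1..xn = e1 in e2 *)
| ECall of nat & seq expr
| EPrim of nat & seq expr
| EIf of expr & expr & expr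
| EBundle of seq expr
| EFork of nat & seq expr
| EJoin of expr.

Record lang := Lang {
  truthy : V -> bool;
  prim_in : nat -> nat;
  prim_out : nat -> nat;
  prim_fun : nat -> seq V -> S -> seq V * S;
  prim_fun_size : forall o vs s, size vs = prim_in o ->
                    size (prim_fun o vs s).1 = prim_out o;
  fork_fun : nat -> seq V -> S -> V * S;         (* returns a thread handle *)
  join_fun : V -> S -> option (V * S)            (* None = blocked *)
}.

(* A static program: a fixed table of procedures (parameters, body). *)
Record program := Program {
  plang : lang;
  procs : seq (seq nat * expr)
}.

Definition proc_dflt : seq nat * expr := ([::], EBundle [::]).

Definition arity (P : program) (p : nat) : option nat :=
  if p < size (procs P) then Some (size (nth proc_dflt (procs P) p).1) else None.
Definition params (P : program) (p : nat) : seq nat := (nth proc_dflt (procs P) p).1.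
Definition body (P : program) (p : nat) : expr := (nth proc_dflt (procs P) p).2.

Definition single (D : dim) : bool := dle D (DFin 1).
Definition let_ok (n : nat) (D : dim) : bool :=
  match D with DBot => true | DFin m => n <= m | DTop => false end.

(* #_d(e), relative to an assignment d of out-dimensions to procedures *)
Fixpoint dimof (P : program) (d : nat -> dim) (e : expr) : dim :=
  match e with
  | EVar _ => DFin 1
  | EConst _ => DFin 1
  | ELet xs e1 e2 => if let_ok (size xs) (dimof P d e1) then dimof P d e2 else DTop
  | ECall p es =>
      if (arity P p == Some (size es)) && all single (map (dimof P d) es)
      then d p else DTop
  | EPrim o es =>
      if (prim_in (plang P) o == size es) && all single (map (dimof P d) es)
      then DFin (prim_out (plang P) o) else DTop
  | EIf e0 e1 e2 =>
      if single (dimof P d e0) then djoin (dimof P d e1) (dimof P d e2) else DTop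
  | EBundle es =>
      if all single (map (dimof P d) es) then DFin (size es) else DTop
  | EFork p es =>
      if (arity P p == Some (size es)) && all single (map (dimof P d) es)
      then DFin 1 else DTop
  | EJoin e0 => if single (dimof P d e0) then DFin 1 else DTop
  end.

(* One step of the monotone operator whose least fixpoint gives the
   procedures' out-dimensions. *)
Definition dimF (P : program) (d : nat -> dim) : nat -> dim :=
  fun p => dimof P d (body P p).

(* Least fixpoint by Kleene iteration from ⊥: the lattice is flat, so each
   of the finitely many procedures changes at most twice; 2*#procs + 1
   iterations reach the least fixpoint. *)
Definition outdim (P : program) : nat -> dim :=
  iter (2 * size (procs P)).+1 (dimF P) (fun _ => DBot).

Definition dimE (P : program) (e : expr) : dim := dimof P (outdim P) e.

Definition env := nat -> option V.
Definition env0 : env := fun _ => None.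
Definition upd (r : env) (x : nat) (v : V) : env :=
  fun y => if y == x then Some v else r y.
Fixpoint bind (r : env) (xs : seq nat) (vs : seq V) : env :=
  match xs, vs with
  | x :: xs', v :: vs' => bind (upd r x v) xs' vs'
  | _, _ => r
  end.

Inductive ventry := VSep | VVal of V.

(* holed expressions (pending contractive rules) *)
Inductive hole :=
| HLet of seq nat & expr
| HCall of nat & nat
| HPrim of nat & nat
| HIf of expr & expr
| HBundle of nat
| HFork of nat & nat
| HJoin.

Inductive item :=
| IExp of expr & env
| ISep
| IHole of hole & env.

Record config := Config { cmain : seq item; cvals : seq ventry; cstate : S }.
(* stacks are lists with their top first *)

(* pop the topmost segment (values above the topmost separator), in push order *)
Fixpoint pop_seg (vs : seq ventry) : option (seq V * seq ventry) :=
  match vs with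
  | [::] => None
  | VSep :: r => Some ([::], r)
  | VVal v :: r =>
      match pop_seg r with Some (s, r') => Some (rcons s v, r') | None => None end
  end.

(* pop n segments; the result lists them in push order *)
Fixpoint pop_segs (n : nat) (vs : seq ventry) : option (seq (seq V) * seq ventry) :=
  match n with
  | 0 => Some ([::], vs)
  | n'.+1 =>
      match pop_seg vs with
      | Some (s, r) =>
          match pop_segs n' r with
          | Some (ss, r') => Some (rcons ss s, r')
          | None => None
          end
      | None => None
      end
  end.

Definition pop_singles (n : nat) (vs : seq ventry) : option (seq V * seq ventry) :=
  match pop_segs n vs with
  | Some (ss, r) => if all (fun s => size s == 1) ss then Some (flatten ss, r) else None
  | None => None
  end.

Definition push (ws : seq V) (vs : seq ventry) : seq ventry :=
  rev (map VVal ws) ++ vs.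

Definition args_items (es : seq expr) (r : env) : seq item :=
  flatten [seq [:: ISep; IExp e r] | e <- es].

Inductive step (P : program) : config -> config -> Prop :=
| st_sep m vs s :
    step P (Config (ISep :: m) vs s) (Config m (VSep :: vs) s)
| st_var x r v m vs s : r x = Some v ->
    step P (Config (IExp (EVar x) r :: m) vs s) (Config m (VVal v :: vs) s)
| st_const c r m vs s :
    step P (Config (IExp (EConst c) r :: m) vs s) (Config m (VVal c :: vs) s)
| st_let xs e1 e2 r m vs s :
    step P (Config (IExp (ELet xs e1 e2) r :: m) vs s)
           (Config (ISep :: IExp e1 r :: IHole (HLet xs e2) r :: m) vs s)
| st_call p es r m vs s :
    step P (Config (IExp (ECall p es) r :: m) vs s)
           (Config (args_items es r ++ IHole (HCall p (size es)) r :: m) vs s)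
| st_prim o es r m vs s :
    step P (Config (IExp (EPrim o es) r :: m) vs s)
           (Config (args_items es r ++ IHole (HPrim o (size es)) r :: m) vs s)
| st_if e0 e1 e2 r m vs s :
    step P (Config (IExp (EIf e0 e1 e2) r :: m) vs s)
           (Config (ISep :: IExp e0 r :: IHole (HIf e1 e2) r :: m) vs s)
| st_bundle es r m vs s :
    step P (Config (IExp (EBundle es) r :: m) vs s)
           (Config (args_items es r ++ IHole (HBundle (size es)) r :: m) vs s)
| st_fork p es r m vs s :
    step P (Config (IExp (EFork p es) r :: m) vs s)
           (Config (args_items es r ++ IHole (HFork p (size es)) r :: m) vs s)
| st_join e r m vs s :
    step P (Config (IExp (EJoin e) r :: m) vs s)
           (Config (ISep :: IExp e r :: IHole HJoin r :: m) vs s)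
| st_HLet xs e2 r m vs s b rest :
    pop_segs 1 vs = Some ([:: b], rest) -> size xs <= size b ->
    step P (Config (IHole (HLet xs e2) r :: m) vs s)
           (Config (IExp e2 (bind r xs b) :: m) rest s)
| st_HCall p n r m vs s args rest :
    arity P p = Some n -> pop_singles n vs = Some (args, rest) ->
    step P (Config (IHole (HCall p n) r :: m) vs s)
           (Config (IExp (body P p) (bind env0 (params P p) args) :: m) rest s)
| st_HPrim o n r m vs s args rest :
    prim_in (plang P) o = n -> pop_singles n vs = Some (args, rest) ->
    step P (Config (IHole (HPrim o n) r :: m) vs s)
           (Config m (push (prim_fun (plang P) o args s).1 rest)
                     (prim_fun (plang P) o args s).2)
| st_HIf e1 e2 r m vs s v rest :
    pop_singles 1 vs = Some ([:: v], rest) ->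
    step P (Config (IHole (HIf e1 e2) r :: m) vs s)
           (Config (IExp (if truthy (plang P) v then e1 else e2) r :: m) rest s)
| st_HBundle n r m vs s args rest :
    pop_singles n vs = Some (args, rest) ->
    step P (Config (IHole (HBundle n) r :: m) vs s)
           (Config m (push args rest) s)
| st_HFork p n r m vs s args rest :
    arity P p = Some n -> pop_singles n vs = Some (args, rest) ->
    step P (Config (IHole (HFork p n) r :: m) vs s)
           (Config m (VVal (fork_fun (plang P) p args s).1 :: rest)
                     (fork_fun (plang P) p args s).2)
| st_HJoin r m vs s v rest w s' :
    pop_singles 1 vs = Some ([:: v], rest) -> join_fun (plang P) v s = Some (w, s') ->
    step P (Config (IHole HJoin r :: m) vs s)
           (Config m (VVal w :: rest) s').

Inductive star (R : config -> config -> Prop) : config -> config -> Prop :=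
| star_refl c : star R c c
| star_step c1 c2 c3 : R c1 c2 -> star R c2 c3 -> star R c1 c3.

Definition init (e : expr) (G : S) : config := Config [:: IExp e env0] [:: VSep] G.

Definition shape_ok (P : program) (h : hole) (vs : seq ventry) : bool :=
  match h with
  | HLet xs _ =>
      match pop_segs 1 vs with Some ([:: b], _) => size xs <= size b | _ => false end
  | HCall p n =>
      (if arity P p is Some k then k == n else true) && pop_singles n vs
  | HPrim o n => (prim_in (plang P) o == n) && pop_singles n vs
  | HIf _ _ => pop_singles 1 vs
  | HBundle n => pop_singles n vs
  | HFork p n =>
      (if arity P p is Some k then k == n else true) && pop_singles n vs
  | HJoin => pop_singles 1 vs
  end.

Definition fails_dim (P : program) (c : config) : bool :=
  match cmain c with
  | IHole h _ :: _ => ~~ shape_ok P h (cvals c)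
  | _ => false
  end.

End Epsilon0.

(** The dimension [#(e)] is an abstract interpretation of the machine: it
    predicts how many values each expression leaves on the value stack.  We
    abstract a value stack by the list of its segment sizes and define an
    invariant [safe] saying that the pending main-stack items, fed with their
    predicted dimensions, always find segments of the sizes their contractive
    rules expect.  A consistently-dimensioned initial configuration is safe,
    every step preserves safety (procedure calls rely on [outdim] being a fixed
    point of the inference on procedure bodies), and a safe configuration whose
    top is a holed expression has a value stack of the required shape. *)
From mathcomp Require Import all_boot.
From Stdlib Require Import Classical.
From Stdlib Require List.
Set Implicit Arguments. Unset Strict Implicit. Unset Printing Implicit Defensive.

Lemma dle_refl a : dle a a.
Proof. by case: a => //= n; rewrite eqxx. Qed.

Lemma dle_top a : dle a DTop.
Proof. by case: a. Qed.

Lemma dle_trans a b c : dle a b -> dle b c -> dle a c.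
Proof. by case: a => [|m|]; case: b => [|n|]; case: c => [|k|] //= /eqP ->. Qed.

Lemma dle_anti a b : dle a b -> dle b a -> a = b.
Proof. by case: a => [|m|]; case: b => [|n|] //= /eqP ->. Qed.

Lemma dle_cases a b : dle a b -> [\/ a = DBot, a = b | b = DTop].
Proof.
by case: a => [|m|]; case: b => [|n|] //=; try move/eqP->; constructor.
Qed.

Lemma dle_djoinl a b : dle a (djoin a b).
Proof.
case: a => [|m|]; case: b => [|n|] //=; rewrite ?dle_refl //.
by case: eqP => //= _; rewrite eqxx.
Qed.

Lemma dle_djoinr a b : dle b (djoin a b).
Proof.
case: a => [|m|]; case: b => [|n|] //=; rewrite ?dle_refl //.
by case: eqP => //= ->; rewrite eqxx.
Qed.

Lemma djoin_dle2 a a' b b' : dle a a' -> dle b b' -> dle (djoin a b) (djoin a' b').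
Proof.
case/dle_cases => [->|->|->] le_b.
- exact: dle_trans le_b (dle_djoinr _ _).
- case/dle_cases: le_b => [->|->|->]; first by case: a' (dle_djoinl a' b').
    exact: dle_refl.
  by case: a' => [|n|]; rewrite /= ?dle_top.
- have -> : djoin DTop b' = DTop by case: (b').
  exact: dle_top.
Qed.

Lemma let_ok_anti n a b : dle a b -> let_ok n b -> let_ok n a.
Proof. by case: a => [|m|]; case: b => [|k|] //= /eqP ->. Qed.

Lemma single_cases a : single a -> a = DBot \/ a = DFin 1.
Proof. by case: a => [|m|] //= => [_|/eqP ->]; [left|right]. Qed.

Lemma dle_if_top (c1 c2 : bool) a b : (c2 -> c1) -> dle a b ->
  dle (if c1 then a else DTop) (if c2 then b else DTop).
Proof. by case: c2 => [->|] //; case: c1; rewrite dle_top. Qed.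

Definition drank (a : dim) : nat :=
  match a with DBot => 0 | DFin _ => 1 | DTop => 2 end.

Lemma drank_le a b : dle a b -> drank a <= drank b.
Proof. by case/dle_cases => [->|->|->] //; case: a. Qed.

Lemma drank_lt a b : dle a b -> a <> b -> drank a < drank b.
Proof. by case: a => [|m|]; case: b => [|k|] //= /eqP ->. Qed.

Lemma drank_le2 a : drank a <= 2.
Proof. by case: a. Qed.

(** Kleene iteration on [nat -> dim], for an operator that only depends on
    its argument at the first [n] points: the flat lattice has height 2, so
    [2 n + 1] iterations from bottom reach a fixed point. *)
Section FlatKleene.
Variables (F : (nat -> dim) -> nat -> dim) (n : nat).
Hypothesis F_mono : forall d1 d2, (forall p, dle (d1 p) (d2 p)) ->
  forall p, dle (F d1 p) (F d2 p).
Hypothesis F_local : forall d1 d2 p, n <= p -> F d1 p = F d2 p.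

Definition kleene k := iter k F (fun _ => DBot).
Definition kleene_stable k := forall p, kleene k p = kleene k.+1 p.
Definition dim_height (d : nat -> dim) := \sum_(p < n) drank (d p).

Lemma kleene_chain k p : dle (kleene k p) (kleene k.+1 p).
Proof. by elim: k p => [|k IH] p //=; apply: F_mono. Qed.

Lemma kleene_stableS k : kleene_stable k -> kleene_stable k.+1.
Proof.
move=> st p; rewrite /kleene !iterS.
by apply: dle_anti; apply: F_mono => q; rewrite -/(kleene k) -/(kleene k.+1) st dle_refl.
Qed.

Lemma kleene_height_le k : dim_height (kleene k) <= 2 * n.
Proof.
apply: (@leq_trans (\sum_(p < n) 2)); first by apply: leq_sum => p _; apply: drank_le2.
by rewrite sum_nat_const card_ord mulnC.
Qed.

Lemma kleene_height_lt k : ~ kleene_stable k.+1 ->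
  dim_height (kleene k.+1) < dim_height (kleene k.+2).
Proof.
move=> unst; have [p neq] := not_all_ex_not _ _ unst.
have ltpn : p < n.
  by rewrite ltnNge; apply/negP => lenp; apply: neq; apply: F_local.
rewrite /dim_height (bigD1 (Ordinal ltpn)) //.
rewrite [X in _ < X](bigD1 (Ordinal ltpn)) //.
rewrite -addSn; apply: leq_add; first exact: drank_lt (kleene_chain _ _) neq.
by apply: leq_sum => q _; apply/drank_le/kleene_chain.
Qed.

Lemma kleene_stable_or_height j :
  kleene_stable j.+1 \/ j < dim_height (kleene j.+2).
Proof.
elim: j => [|j [st|lt]].
- have [|unst] := classic (kleene_stable 1); first by left.
  by right; apply: leq_ltn_trans (leq0n _) (kleene_height_lt unst).
- by left; apply: kleene_stableS.
- have [|unst] := classic (kleene_stable j.+2); first by left.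
  by right; apply: leq_ltn_trans lt (kleene_height_lt unst).
Qed.

Lemma kleene_fixpoint p :
  F (iter (2 * n).+1 F (fun _ => DBot)) p = iter (2 * n).+1 F (fun _ => DBot) p.
Proof.
have [st|] := kleene_stable_or_height (2 * n); first by rewrite [RHS]st.
by rewrite ltnNge kleene_height_le.
Qed.

End FlatKleene.

Section Dimensions.
Variables (V S : Type) (P : program V S).

Definition expr_nested_ind (Q : expr V -> Prop)
  (hvar : forall x, Q (EVar V x)) (hconst : forall c, Q (EConst c))
  (hlet : forall xs e1 e2, Q e1 -> Q e2 -> Q (ELet xs e1 e2))
  (hcall : forall p es, List.Forall Q es -> Q (ECall p es))
  (hprim : forall o es, List.Forall Q es -> Q (EPrim o es))
  (hif : forall e0 e1 e2, Q e0 -> Q e1 -> Q e2 -> Q (EIf e0 e1 e2))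
  (hbundle : forall es, List.Forall Q es -> Q (EBundle es))
  (hfork : forall p es, List.Forall Q es -> Q (EFork p es))
  (hjoin : forall e, Q e -> Q (EJoin e)) : forall e, Q e :=
  fix F e :=
    let Fs := fix Fs (es : seq (expr V)) : List.Forall Q es :=
      if es is e :: es' then List.Forall_cons _ (F e) (Fs es')
      else List.Forall_nil _ in
    match e with
    | EVar x => hvar x
    | EConst c => hconst c
    | ELet xs e1 e2 => hlet xs e1 e2 (F e1) (F e2)
    | ECall p es => hcall p es (Fs es)
    | EPrim o es => hprim o es (Fs es)
    | EIf e0 e1 e2 => hif e0 e1 e2 (F e0) (F e1) (F e2)
    | EBundle es => hbundle es (Fs es)
    | EFork p es => hfork p es (Fs es)
    | EJoin e => hjoin e (F e)
    end.

Lemma all_single_anti (f1 f2 : expr V -> dim) es :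
  List.Forall (fun e => dle (f1 e) (f2 e)) es ->
  all single (map f2 es) -> all single (map f1 es).
Proof.
elim=> //= e es' le_e _ IH /andP[s_e s_es]; apply/andP; split; last exact: IH.
exact: dle_trans le_e s_e.
Qed.

Lemma dimof_mono d1 d2 : (forall p, dle (d1 p) (d2 p)) ->
  forall e, dle (dimof P d1 e) (dimof P d2 e).
Proof.
move=> le_d; elim/expr_nested_ind => //=.
- by move=> xs e1 e2 le1 le2; apply: dle_if_top le2; apply: let_ok_anti.
- move=> p es /all_single_anti s_es; apply: dle_if_top (le_d p).
  by case/andP => -> /s_es.
- move=> o es /all_single_anti s_es; apply: dle_if_top (dle_refl _).
  by case/andP => -> /s_es.
- move=> e0 e1 e2 le0 le1 le2; apply: dle_if_top (djoin_dle2 le1 le2).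
  exact: dle_trans le0.
- by move=> es /all_single_anti s_es; apply: dle_if_top (dle_refl _).
- move=> p es /all_single_anti s_es; apply: dle_if_top (dle_refl _).
  by case/andP => -> /s_es.
- by move=> e0 le0; apply: dle_if_top (dle_refl _); apply: dle_trans le0.
Qed.

Lemma outdim_fixpoint p : dimof P (outdim P) (body P p) = outdim P p.
Proof.
apply: (kleene_fixpoint (F := dimF P)) => [d1 d2 le_d q|d1 d2 q le_nq].
  exact: dimof_mono.
by rewrite /dimF /body nth_default.
Qed.

End Dimensions.

Section Safety.
Variables (V S : Type) (P : program V S).

Definition grow_top (k : nat) (l : seq nat) : seq nat :=
  if l is j :: l' then (j + k) :: l' else [:: k].
Arguments grow_top : simpl never.

(** A value stack is abstracted by the sizes of its segments, topmost first;
    the list is never empty since the bottom segment is always present. *)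
Fixpoint seg_sizes (vs : seq (ventry V)) : seq nat :=
  match vs with
  | [::] => [:: 0]
  | VSep :: vs' => 0 :: seg_sizes vs'
  | VVal _ :: vs' => grow_top 1 (seg_sizes vs')
  end.

(** Pops [k] segments of size 1; like [pop_seg], each pop needs a separator
    below the popped segment, hence a nonempty remainder. *)
Fixpoint pop_ones (k : nat) (l : seq nat) : option (seq nat) :=
  if k is k'.+1 then
    if l is j :: l' then if (j == 1) && (l' != [::]) then pop_ones k' l' else None
    else None
  else Some l.

(** [K] must hold once an expression of dimension [D] has pushed its result;
    an expression of dimension [DBot] never returns, so nothing is required. *)
Definition on_result (D : dim) (K : seq nat -> Prop) (l : seq nat) : Prop :=
  match D with DBot => True | DFin j => K (grow_top j l) | DTop => False end.

Local Notation dimO := (dimof P (outdim P)).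

Fixpoint safe (m : seq (item V)) (l : seq nat) : Prop :=
  match m with
  | [::] => True
  | ISep :: m' => safe m' (0 :: l)
  | IExp e _ :: m' => on_result (dimO e) (safe m') l
  | IHole (HLet xs e2) _ :: m' =>
      if l is j :: l'
      then [/\ size xs <= j, l' != [::] & on_result (dimO e2) (safe m') l']
      else False
  | IHole (HCall p k) _ :: m' => arity P p = Some k /\
      exists2 l', pop_ones k l = Some l' & on_result (outdim P p) (safe m') l'
  | IHole (HPrim o k) _ :: m' => prim_in (plang P) o = k /\
      exists2 l', pop_ones k l = Some l' & safe m' (grow_top (prim_out (plang P) o) l')
  | IHole (HIf e1 e2) _ :: m' => exists2 l', pop_ones 1 l = Some l' &
      on_result (dimO e1) (safe m') l' /\ on_result (dimO e2) (safe m') l'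
  | IHole (HBundle k) _ :: m' =>
      exists2 l', pop_ones k l = Some l' & safe m' (grow_top k l')
  | IHole (HFork p k) _ :: m' => arity P p = Some k /\
      exists2 l', pop_ones k l = Some l' & safe m' (grow_top 1 l')
  | IHole HJoin _ :: m' => exists2 l', pop_ones 1 l = Some l' & safe m' (grow_top 1 l')
  end.

Lemma seg_sizes_neq0 vs : seg_sizes vs != [::].
Proof. by elim: vs => [|[|v] vs] //=; rewrite /grow_top; case: (seg_sizes vs). Qed.

Lemma grow_top0 vs : grow_top 0 (seg_sizes vs) = seg_sizes vs.
Proof.
rewrite /grow_top; case: (seg_sizes vs) (seg_sizes_neq0 vs) => //= j l _.
by rewrite addn0.
Qed.

Lemma grow_topA a b l : grow_top a (grow_top b l) = grow_top (b + a) l.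
Proof. by case: l => [|j l]; rewrite /grow_top ?addnA. Qed.

Lemma seg_sizes_push ws vs : seg_sizes (push ws vs) = grow_top (size ws) (seg_sizes vs).
Proof.
elim: ws vs => [|w ws IH] vs; first by rewrite grow_top0.
by rewrite /push map_cons rev_cons cat_rcons -/(push _ _) IH /= grow_topA add1n.
Qed.

Lemma pop_seg_sizes vs b vs' : pop_seg vs = Some (b, vs') ->
  seg_sizes vs = size b :: seg_sizes vs'.
Proof.
elim: vs b vs' => [|[|v] vs IH] b vs' //=; first by case=> <- <-.
case E: (pop_seg vs) => [[b1 vs1]|] // [<- <-].
by rewrite (IH _ _ E) size_rcons /grow_top addn1.
Qed.

Lemma seg_sizes_pop vs j l : seg_sizes vs = j :: l -> l != [::] ->
  exists b vs', pop_seg vs = Some (b, vs').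
Proof.
elim: vs j l => [|[|v] vs IH] j l /=; [by case=> _ <- | by exists [::], vs |].
rewrite /grow_top; case E: (seg_sizes vs) => [|j' l'] [_ <-] nl; first by [].
by have [b [vs' ->]] := IH _ _ E nl; exists (rcons b v), vs'.
Qed.

Lemma pop_segs_ones k vs bs vs' : pop_segs k vs = Some (bs, vs') ->
  all (fun b => size b == 1) bs ->
  pop_ones k (seg_sizes vs) = Some (seg_sizes vs') /\ size (flatten bs) = k.
Proof.
elim: k vs bs vs' => [|k IH] vs bs vs' /=; first by case=> <- <-.
case E: (pop_seg vs) => [[b vs1]|] //.
case E2: (pop_segs k vs1) => [[bs1 vs2]|] // [<- <-].
rewrite all_rcons => /andP[/eqP sz1 ones].
rewrite (pop_seg_sizes E) sz1 /= seg_sizes_neq0 flatten_rcons size_cat sz1 addn1.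
by have [-> ->] := IH _ _ _ E2 ones.
Qed.

Lemma pop_singles_ones k vs ws vs' : pop_singles k vs = Some (ws, vs') ->
  pop_ones k (seg_sizes vs) = Some (seg_sizes vs') /\ size ws = k.
Proof.
rewrite /pop_singles; case E: (pop_segs k vs) => [[bs vs1]|] //.
by case: ifP => // ones [<- <-]; apply: pop_segs_ones E ones.
Qed.

Lemma pop_ones_singles k vs l : pop_ones k (seg_sizes vs) = Some l ->
  pop_singles k vs.
Proof.
rewrite /pop_singles; elim: k vs l => [|k IH] vs l //=.
case E: (seg_sizes vs) => [|j l1] //; case: ifP => // /andP[/eqP j1 nl1] popk.
have [b [vs' E1]] := seg_sizes_pop E nl1; rewrite E1.
move: E; rewrite (pop_seg_sizes E1) => -[szb Evs']; rewrite -Evs' in popk.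
move: (IH _ _ popk); case: (pop_segs k vs') => [[bs vs2]|] //.
by rewrite all_rcons szb j1; case: ifP.
Qed.

Lemma pop_ones_nseq k vs :
  pop_ones k (nseq k 1 ++ seg_sizes vs) = Some (seg_sizes vs).
Proof.
elim: k => [|k IH] //=; rewrite IH.
by case: k {IH} => //=; rewrite seg_sizes_neq0.
Qed.

Lemma on_result_dle D1 D K l : dle D1 D -> on_result D K l -> on_result D1 K l.
Proof. by case/dle_cases => [->|->|->]. Qed.

Lemma safe_args es r m l : all single (map dimO es) ->
  safe m (nseq (size es) 1 ++ l) -> safe (args_items es r ++ m) l.
Proof.
elim: es l => [|e es IH] l //= /andP[/single_cases [->|->] s_es] sm //=.
by apply: IH; rewrite // /grow_top -cat1s catA -[[:: 1]]/(nseq 1 1) -nseqD addn1.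
Qed.

Lemma safe_hole_shape h r m vs :
  safe (IHole h r :: m) (seg_sizes vs) -> shape_ok P h vs.
Proof.
case: h => [xs e2|p k|o k|e1 e2|k|p k|].
- rewrite /=; case E: (seg_sizes vs) => [|j l] // [le_xs nl _].
  have [b [vs' Evs]] := seg_sizes_pop E nl; move: E.
  by rewrite (pop_seg_sizes Evs) => -[szb _]; rewrite Evs /= szb.
- by case=> ar [l /pop_ones_singles]; rewrite /= ar eqxx => ->.
- by case=> ar [l /pop_ones_singles]; rewrite /= ar eqxx => ->.
- by case=> l /pop_ones_singles.
- by case=> l /pop_ones_singles.
- by case=> ar [l /pop_ones_singles]; rewrite /= ar eqxx => ->.
- by case=> l /pop_ones_singles.
Qed.

Lemma safe_step c c' : step P c c' ->
  safe (cmain c) (seg_sizes (cvals c)) -> safe (cmain c') (seg_sizes (cvals c')).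
Proof.
case=> //.
- move=> xs e1 e2 r m vs s /=; case: (dimO e1) => [|j|] //= sm.
  by case: ifP sm => //= le_xs sm; split; rewrite ?seg_sizes_neq0.
- move=> p es r m vs s /=; case: ifP => // /andP[/eqP ar s_es] sm.
  by apply: safe_args => //=; split => //; exists (seg_sizes vs); rewrite ?pop_ones_nseq.
- move=> o es r m vs s /=; case: ifP => // /andP[/eqP ar s_es] sm.
  by apply: safe_args => //=; split => //; exists (seg_sizes vs); rewrite ?pop_ones_nseq.
- move=> e0 e1 e2 r m vs s /=; case: ifP => // /single_cases[->|->] sm //=.
  exists (seg_sizes vs); first by rewrite seg_sizes_neq0.
  by split; apply: on_result_dle sm; [apply: dle_djoinl | apply: dle_djoinr].
- move=> es r m vs s /=; case: ifP => // s_es sm.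
  by apply: safe_args => //=; exists (seg_sizes vs); rewrite ?pop_ones_nseq.
- move=> p es r m vs s /=; case: ifP => // /andP[/eqP ar s_es] sm.
  by apply: safe_args => //=; split => //; exists (seg_sizes vs); rewrite ?pop_ones_nseq.
- move=> e r m vs s /=; case: ifP => // /single_cases[->|->] sm //=.
  by exists (seg_sizes vs); rewrite ?seg_sizes_neq0.
- move=> xs e2 r m vs s b vs' /=; case E: (pop_seg vs) => [[b1 vs1]|] // [_ <-] _.
  by rewrite (pop_seg_sizes E) => -[].
- move=> p k r m vs s ws vs' _ /pop_singles_ones[pop _] [_ [l]].
  by rewrite pop => -[<-] sm /=; rewrite outdim_fixpoint.
- move=> o k r m vs s ws vs' ar /pop_singles_ones[pop sz] [_ [l]].
  by rewrite pop seg_sizes_push prim_fun_size ?sz // => -[<-].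
- move=> e1 e2 r m vs s v vs' /pop_singles_ones[pop _] [l].
  by rewrite pop => -[<-] []; case: (truthy _ v).
- move=> k r m vs s ws vs' /pop_singles_ones[pop sz] [l].
  by rewrite pop seg_sizes_push sz => -[<-].
- move=> p k r m vs s ws vs' _ /pop_singles_ones[pop _] [_ [l]].
  by rewrite pop => -[<-].
- move=> r m vs s v vs' w s' /pop_singles_ones[pop _] _ [l].
  by rewrite pop => -[<-].
Qed.

Lemma safe_star c c' : star (step P) c c' ->
  safe (cmain c) (seg_sizes (cvals c)) -> safe (cmain c') (seg_sizes (cvals c')).
Proof. by elim=> // c1 c2 c3 st _ IH sc1; apply/IH/(safe_step st). Qed.

Lemma safe_init e (G : S) : dlt (dimE P e) DTop ->
  safe (cmain (init e G)) (seg_sizes (cvals (init e G))).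
Proof. by rewrite /dimE /=; case: (dimO e). Qed.

End Safety.

Theorem mainTheorem8 (V S : Type) (P : program V S) (e : expr V) (G : S)
    (chi : config V S) :
  dlt (dimE P e) DTop ->
  star (step P) (init e G) chi ->
  ~~ fails_dim P chi.
Proof.
move=> /(safe_init G) safe0 /safe_star /(_ safe0).
case: chi => [[|[e' r| |h r] m] vs s] //=; rewrite /fails_dim /= negbK.
exact: safe_hole_shape.
Qed.
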